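(* Let $n\ge 1$ and $1\le k\le d$ be integers, set $p=k/d$, and let $\mathbf{x}_1,\dots,\mathbf{x}_n\in\mathbb{R}^d$ with $\mathbf{x}_i=(x_{i1},\dots,x_{id})$. Each node $i$ independently chooses a uniformly random subset $S_i\subseteq\{1,\dots,d\}$ of size $k$, and sets $h_{ij}=x_{ij}$ if $j\in S_i$ and $h_{ij}=0$ otherwise. Let $M_j=|\{i:j\in S_i\}|$. Let $T:\{1,\dots,n\}\to\mathbb{R}\setminus\{0\}$ be such that $$\bar\beta=\Big(\sum_{m=1}^{n}\frac{k}{d\,T(m)}\binom{n-1}{m-1}p^{m-1}(1-p)^{n-m}\Big)^{-1}$$ is well defined. Define $\hat{\mathbf{x}}=(\hat x_1,\dots,\hat x_d)$ by $\hat{x}_j=\frac{1}{n}\frac{\bar\beta}{T(M_j)}\sum_{i=1}^n h_{ij}$ if $M_j\ge1$ and $\hat x_j=0$ if $M_j=0$, and let $\bar{\mathbf{x}}=\frac1n\sum_{i=1}^n\mathbf{x}_i$. Then $$\mathbb{E}\big[\|\hat{\mathbf{x}}-\bar{\mathbf{x}}\|_2^2\big]=\frac{1}{n^2}\Big(\frac{d}{k}-1\Big)R_1+\frac{1}{n^2}\big(c_1R_1-c_2R_2\big),$$ where $R_1=\sum_{i=1}^n\|\mathbf{x}_i\|_2^2$, $R_2=2\sum_{i=1}^n\sum_{l=i+1}^n\langle\mathbf{x}_i,\mathbf{x}_l\rangle$, $$c_1=\bar\beta^2\sum_{m=1}^{n}\frac{k}{d\,T(m)^2}\binom{n-1}{m-1}p^{m-1}(1-p)^{n-m}-\frac{d}{k},\qquad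 c_2=1-\bar\beta^2\sum_{m=2}^{n}\frac{k^2}{d^2T(m)^2}\binom{n-2}{m-2}p^{m-2}(1-p)^{n-m},$$ and the expectation is over the random subsets $S_1,\dots,S_n$.
   Context: This is the mean squared error of the Rand-$k$-Spatial family of estimators of $\bar{\mathbf{x}}$ from Rand-$k$ sparsified vectors; the choice $T\equiv1$ recovers the standard Rand-$k$ estimator $\frac{1}{n}\frac{d}{k}\sum_i\mathbf{h}_i$. *)

From mathcomp Require Import all_boot all_order all_algebra.
Set Implicit Arguments. Unset Strict Implicit. Unset Printing Implicit Defensive.
Import Order.TTheory GRing.Theory Num.Theory.
Local Open Scope ring_scope.

Section RandKSpatial.
Variables (R : realFieldType) (n d k : nat).

Definition config := {ffun 'I_n -> {set 'I_d}}.

Definition subset_prob (A : {set 'I_d}) : R :=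
  if #|A| == k then ('C(d, k)%:R)^-1 else 0.

Definition config_prob (S : config) : R := \prod_(i < n) subset_prob (S i).

Definition expect (f : config -> R) : R :=
  \sum_(S : config) config_prob S * f S.

Definition pk : R := k%:R / d%:R.

Definition Mcount (S : config) (j : 'I_d) : nat := #|[set i | j \in S i]|.

Definition hval (x : 'I_n -> 'I_d -> R) (S : config) (i : 'I_n) (j : 'I_d) : R :=
  if j \in S i then x i j else 0.

Definition betabar (T : nat -> R) : R :=
  (\sum_(1 <= m < n.+1)
     k%:R / (d%:R * T m) * 'C(n.-1, m.-1)%:R * pk ^+ m.-1 * (1 - pk) ^+ (n - m))^-1.

Definition xhat (T : nat -> R) (x : 'I_n -> 'I_d -> R) (S : config) (j : 'I_d) : R :=
  if (1 <= Mcount S j)%N then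
    n%:R^-1 * (betabar T / T (Mcount S j)) * \sum_(i < n) hval x S i j
  else 0.

Definition xbar (x : 'I_n -> 'I_d -> R) (j : 'I_d) : R := n%:R^-1 * \sum_(i < n) x i j.

Definition sqerr (T : nat -> R) (x : 'I_n -> 'I_d -> R) (S : config) : R :=
  \sum_(j < d) (xhat T x S j - xbar x j) ^+ 2.

Definition dotp (u v : 'I_d -> R) : R := \sum_(j < d) u j * v j.

Definition R1 (x : 'I_n -> 'I_d -> R) : R := \sum_(i < n) dotp (x i) (x i).

Definition R2 (x : 'I_n -> 'I_d -> R) : R :=
  2 * \sum_(i < n) \sum_(l < n | (i < l)%N) dotp (x i) (x l).

Definition c1 (T : nat -> R) : R :=
  betabar T ^+ 2 * \sum_(1 <= m < n.+1)
     k%:R / (d%:R * T m ^+ 2) * 'C(n.-1, m.-1)%:R * pk ^+ m.-1 * (1 - pk) ^+ (n - m)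
  - d%:R / k%:R.

Definition c2 (T : nat -> R) : R :=
  1 - betabar T ^+ 2 * \sum_(2 <= m < n.+1)
     (k%:R ^+ 2) / (d%:R ^+ 2 * T m ^+ 2) * 'C(n - 2, m - 2)%:R
       * pk ^+ (m - 2) * (1 - pk) ^+ (n - m).

End RandKSpatial.

From mathcomp Require Import all_boot all_order all_algebra ring.
Set Implicit Arguments. Unset Strict Implicit. Unset Printing Implicit Defensive.
Import GRing.Theory Num.Theory.

(* Fix a coordinate j.  The estimate x^_j only depends on the occupancy set
   B = {i | j \in S_i}; since the S_i are independent and each contains j with
   probability p = k/d, the set B has the product Bernoulli(p) law
   P(B) = p^|B| (1-p)^(n-|B|).  Averaging a function of |B| over the B that
   contain one given node (resp. two given nodes) produces the weights
   C(n-1, m-1) p^m (1-p)^(n-m) (resp. C(n-2, m-2) p^m (1-p)^(n-m)), which is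
   where the sums in betabar, c1 and c2 come from.  The normalisation betabar
   makes x^_j unbiased, so its mean squared error is E[x^_j^2] - xbar_j^2;
   summing over j gives R1 from the diagonal terms x_ij^2 and R2 from the
   cross terms x_ij x_lj. *)

Lemma card_supset_draws (T : finType) (C : {set T}) m :
  #|[set B : {set T} | C \subset B & #|B| == m]| =
  if (#|C| <= m)%N then 'C(#|T| - #|C|, m - #|C|) else 0%N.
Proof.
case: leqP => [leCm | ltmC]; last first.
  apply/eqP; rewrite cards_eq0; apply/eqP/setP => B; rewrite !inE.
  by apply/andP => -[/subset_leq_card + /eqP Bm]; rewrite Bm leqNgt ltmC.
have cardCC : #|~: C| = (#|T| - #|C|)%N by rewrite -(cardsC C) addKn.
have UCK (A : {set T}) : A \subset ~: C -> (C :|: A) :\: C = A.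
  by move=> sAC; rewrite setDUl setDv set0U; apply/setDidPl; rewrite disjoints_subset.
rewrite -cardCC -cards_draws -[RHS](@card_in_imset _ _ (setU C)); last first.
  move=> A1 A2; rewrite !inE => /andP[sA1 _] /andP[sA2 _] eqU.
  by rewrite -(UCK A1) // -(UCK A2) // eqU.
apply: eq_card => B; rewrite inE; apply/andP/imsetP.
  case=> sCB /eqP cB.
  exists (B :\: C); last apply/setP => y.
    by rewrite inE subsetDr cardsDS // cB eqxx.
  rewrite !inE.
  by have [/(subsetP sCB) -> | //] := boolP (y \in C).
case=> A; rewrite inE => /andP[sAC /eqP cA] ->; split; first exact: subsetUl.
have /disjoint_setI0 CA0 : [disjoint C & A] by rewrite disjoints_subset -setCS setCK.
by rewrite cardsU CA0 cards0 subn0 cA subnKC.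
Qed.

Local Open Scope ring_scope.

Lemma sum_supset_card (T : finType) (V : nmodType) (C : {set T}) (g : nat -> V) :
  \sum_(B : {set T} | C \subset B) g #|B| =
  \sum_(#|C| <= m < #|T|.+1) g m *+ 'C(#|T| - #|C|, m - #|C|).
Proof.
transitivity (\sum_(B : {set T} | C \subset B) \sum_(0 <= m < #|T|.+1 | m == #|B|) g m).
  by apply: eq_bigr => B _; rewrite big_nat1_eq leq0n ltnS max_card.
rewrite (exchange_big_dep xpredT) //= (big_cat_nat (leq0n #|C|)) ?leqW ?max_card //=.
rewrite [X in X + _ = _]big1_seq ?add0r => [|m]; last first.
  rewrite mem_index_iota => /andP[_ /andP[_ ltmC]]; apply: big_pred0 => B.
  by apply/andP => -[/subset_leq_card + /eqP mB]; rewrite -mB leqNgt ltmC.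
apply: eq_big_nat => m /andP[leCm _].
have := card_supset_draws C m; rewrite leCm => <-; rewrite -sumr_const.
by apply: eq_bigl => B; rewrite inE eq_sym.
Qed.

Section SubsetSums.
Variables (T : finType) (R : pzSemiRingType) (g : nat -> R).

Lemma sum_mem_card (i : T) :
  \sum_(B : {set T} | i \in B) g #|B| =
  \sum_(1 <= m < #|T|.+1) 'C(#|T| - 1, m - 1)%:R * g m.
Proof.
under eq_bigl do rewrite -sub1set.
by rewrite sum_supset_card cards1; apply: eq_bigr => m _; rewrite mulr_natl.
Qed.

Lemma sum_mem2_card (i l : T) : i != l ->
  \sum_(B : {set T} | (i \in B) && (l \in B)) g #|B| =
  \sum_(2 <= m < #|T|.+1) 'C(#|T| - 2, m - 2)%:R * g m.
Proof.
move=> neq_il; under eq_bigl do rewrite -!sub1set -subUset.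
by rewrite sum_supset_card cards2 neq_il; apply: eq_bigr => m _; rewrite mulr_natl.
Qed.

Lemma sum_subsets_linear (y : T -> R) :
  \sum_(B : {set T}) g #|B| * \sum_(i in B) y i =
  (\sum_(1 <= m < #|T|.+1) 'C(#|T| - 1, m - 1)%:R * g m) * \sum_i y i.
Proof.
under eq_bigr do rewrite mulr_sumr.
rewrite (exchange_big_dep (xpredT : pred T)) //= mulr_sumr; apply: eq_bigr => i _.
by rewrite -mulr_suml sum_mem_card.
Qed.

Lemma sum_subsets_quadratic (y : T -> R) :
  \sum_(B : {set T}) g #|B| * (\sum_(i in B) y i) ^+ 2 =
  (\sum_(1 <= m < #|T|.+1) 'C(#|T| - 1, m - 1)%:R * g m) * \sum_i y i ^+ 2
  + (\sum_(2 <= m < #|T|.+1) 'C(#|T| - 2, m - 2)%:R * g m)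
    * \sum_i \sum_(l | l != i) y i * y l.
Proof.
transitivity (\sum_(B : {set T}) \sum_(i in B) \sum_(l in B) g #|B| * (y i * y l)).
  apply: eq_bigr => B _; rewrite expr2 mulr_suml mulr_sumr.
  by apply: eq_bigr => i _; rewrite !mulr_sumr.
rewrite (exchange_big_dep (xpredT : pred T)) //= !mulr_sumr -big_split /=.
apply: eq_bigr => i _; rewrite (exchange_big_dep (xpredT : pred T)) //= (bigD1 i) //=.
congr (_ + _).
  by under eq_bigl do rewrite andbb; rewrite -mulr_suml sum_mem_card expr2.
rewrite mulr_sumr; apply: eq_bigr => l neq_li.
by rewrite -mulr_suml sum_mem2_card // eq_sym.
Qed.
End SubsetSums.

Lemma sqr_sum_split (I : finType) (R : pzSemiRingType) (y : I -> R) :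
  (\sum_i y i) ^+ 2 = \sum_i y i ^+ 2 + \sum_i \sum_(l | l != i) y i * y l.
Proof.
rewrite expr2 mulr_suml -big_split /=; apply: eq_bigr => i _.
by rewrite mulr_sumr (bigD1 i) //= expr2.
Qed.

Lemma sum_ord_neq_sym (R : pzSemiRingType) n (f : 'I_n -> 'I_n -> R) :
  (forall i l : 'I_n, f i l = f l i) ->
  \sum_(i < n) \sum_(l < n | l != i) f i l = 2 * \sum_(i < n) \sum_(l < n | (i < l)%N) f i l.
Proof.
move=> f_sym.
transitivity (\sum_(i < n) \sum_(l < n | (i < l)%N) f i l
              + \sum_(i < n) \sum_(l < n | (l < i)%N) f i l).
  rewrite -big_split; apply: eq_bigr => i _.
  rewrite (bigID (fun l : 'I_n => (i < l)%N)) /=.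
  by congr (_ + _); apply: eq_bigl => l; rewrite -(inj_eq val_inj) /=; case: ltngtP.
rewrite mulr_natl mulr2n; congr (_ + _).
rewrite (exchange_big_dep (xpredT : pred 'I_n)) //=.
by apply: eq_bigr => i _; apply: eq_bigr => l _; apply: f_sym.
Qed.

Lemma sum_weighted_sqr_dev (I : finType) (R : comPzRingType) (w f : I -> R) (c : R) :
  \sum_i w i = 1 -> \sum_i w i * f i = c ->
  \sum_i w i * (f i - c) ^+ 2 = \sum_i w i * f i ^+ 2 - c ^+ 2.
Proof.
move=> sum_w mean_f.
transitivity (\sum_i w i * f i ^+ 2 - 2 * c * \sum_i w i * f i + c ^+ 2 * \sum_i w i).
  rewrite !mulr_sumr -sumrB -big_split /=; apply: eq_bigr => i _; ring.
by rewrite mean_f sum_w; ring.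
Qed.

Lemma prodr_mem_if (T : finType) (R : comPzSemiRingType) (B : {set T}) (a b : R) :
  \prod_i (if i \in B then a else b) = a ^+ #|B| * b ^+ (#|T| - #|B|).
Proof.
rewrite (bigID (mem B)) /= (eq_bigr (fun=> a)) => [|i ->] //.
rewrite [X in _ * X](eq_bigr (fun=> b)) => [|i /negbTE ->] //.
by rewrite prodr_const (prodr_const (predC (mem B))) -(cardC (mem B)) addKn.
Qed.

Section SubsetLaw.
Variables (R : realFieldType) (d k : nat).
Hypotheses (k_gt0 : (0 < k)%N) (k_le_d : (k <= d)%N).

Let d_neq0 : d%:R != 0 :> R.
Proof. by rewrite pnatr_eq0 -lt0n (leq_trans k_gt0). Qed.

Let binom_neq0 : 'C(d, k)%:R != 0 :> R.
Proof. by rewrite pnatr_eq0 -lt0n bin_gt0. Qed.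

Lemma sum_subset_prob_supset (C : {set 'I_d}) : (#|C| <= k)%N ->
  \sum_(A : {set 'I_d} | C \subset A) subset_prob R k A =
  'C(d - #|C|, k - #|C|)%:R / 'C(d, k)%:R.
Proof.
move=> leCk.
transitivity (\sum_(A in [set A : {set 'I_d} | C \subset A & #|A| == k]) 'C(d, k)%:R^-1 : R).
  rewrite big_mkcond [RHS]big_mkcond; apply: eq_bigr => A _.
  by rewrite inE /subset_prob; case: (C \subset A).
by rewrite sumr_const card_supset_draws leCk /= card_ord mulr_natl.
Qed.

Lemma sum_subset_prob : \sum_(A : {set 'I_d}) subset_prob R k A = 1.
Proof.
have := @sum_subset_prob_supset set0; rewrite cards0 => /(_ isT).
rewrite !subn0 divff // => <-.
by apply: eq_bigl => A; rewrite sub0set.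
Qed.

Lemma sum_subset_prob_mem (j : 'I_d) :
  \sum_(A : {set 'I_d} | j \in A) subset_prob R k A = pk R d k.
Proof.
under eq_bigl do rewrite -sub1set.
rewrite sum_subset_prob_supset cards1 // /pk.
by apply/eqP; rewrite eqr_div // -!natrM mulnC !subn1 mul_bin_diag prednK.
Qed.

Lemma sum_subset_prob_notin (j : 'I_d) :
  \sum_(A : {set 'I_d} | j \notin A) subset_prob R k A = 1 - pk R d k.
Proof.
have := sum_subset_prob.
rewrite (bigID (fun A : {set _} => j \in A)) /= sum_subset_prob_mem => <-.
by rewrite addrC addrK.
Qed.
End SubsetLaw.

Section Occupancy.
Variables (R : realFieldType) (n d k : nat).
Hypotheses (k_gt0 : (0 < k)%N) (k_le_d : (k <= d)%N).

Definition occupancy (S : config n d) (j : 'I_d) : {set 'I_n} := [set i | j \in S i].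

Lemma sum_config_prob : \sum_(S : config n d) config_prob R k S = 1.
Proof.
rewrite /config_prob -(bigA_distr_bigA (fun _ A => subset_prob R k A)) /=.
by rewrite big1 // => i _; apply: sum_subset_prob.
Qed.

Lemma expect_occupancy (j : 'I_d) (f : config n d -> R) (F : {set 'I_n} -> R) :
  (forall S, f S = F (occupancy S j)) ->
  expect k f =
  \sum_(B : {set 'I_n}) pk R d k ^+ #|B| * (1 - pk R d k) ^+ (n - #|B|) * F B.
Proof.
move=> fE; rewrite /expect (partition_big (occupancy^~ j) xpredT) //=.
apply: eq_bigr => B _.
rewrite (eq_bigr (fun S => config_prob R k S * F B)) => [|S /eqP <-]; last by rewrite fE.
rewrite -big_distrl /=; congr (_ * _).
transitivity (\prod_(i < n) \sum_(A : {set 'I_d} | (j \in A) == (i \in B)) subset_prob R k A).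
  rewrite bigA_distr_big_dep; apply: eq_bigl => S.
  apply/eqP/familyP => [<- i | S_B]; first by rewrite unfold_in inE.
  by apply/setP => i; rewrite inE; apply/eqP; have := S_B i; rewrite unfold_in.
transitivity (\prod_(i < n) (if i \in B then pk R d k else 1 - pk R d k)).
  apply: eq_bigr => i _; case: (i \in B).
    by rewrite -(sum_subset_prob_mem _ k_gt0 k_le_d j); apply: eq_bigl => A; rewrite eqb_id.
  by rewrite -(sum_subset_prob_notin _ k_gt0 k_le_d j); apply: eq_bigl => A; rewrite eqbF_neg.
by rewrite prodr_mem_if card_ord.
Qed.
End Occupancy.

Section Estimator.
Variables (R : realFieldType) (n d k : nat) (T : nat -> R) (x : 'I_n -> 'I_d -> R).
Hypotheses (k_gt0 : (0 < k)%N) (k_le_d : (k <= d)%N).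

Let p := pk R d k.
Let w m := p ^+ m * (1 - p) ^+ (n - m).
Let beta := betabar n d k T.
Let mean_coef := \sum_(1 <= m < n.+1) 'C(n - 1, m - 1)%:R * (w m / T m).
Let diag_coef := \sum_(1 <= m < n.+1) 'C(n - 1, m - 1)%:R * (w m / T m ^+ 2).
Let offdiag_coef := \sum_(2 <= m < n.+1) 'C(n - 2, m - 2)%:R * (w m / T m ^+ 2).

Lemma summand1E m t : (0 < m)%N ->
  k%:R / (d%:R * t) * 'C(n.-1, m.-1)%:R * p ^+ m.-1 * (1 - p) ^+ (n - m) =
  'C(n - 1, m - 1)%:R * (w m / t).
Proof. by case: m => // m _; rewrite /w /p /pk !subn1 /= exprS invfM; ring. Qed.

Lemma summand2E m t : (1 < m)%N ->
  k%:R ^+ 2 / (d%:R ^+ 2 * t) * 'C(n - 2, m - 2)%:R * p ^+ (m - 2) * (1 - p) ^+ (n - m)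
  = 'C(n - 2, m - 2)%:R * (w m / t).
Proof.
by case: m => [|[|m]] // _; rewrite /w /p /pk !subSS subn0 !expr2 !exprS !invfM; ring.
Qed.

Lemma betabar_sumE :
  \sum_(1 <= m < n.+1)
    k%:R / (d%:R * T m) * 'C(n.-1, m.-1)%:R * p ^+ m.-1 * (1 - p) ^+ (n - m)
  = mean_coef.
Proof. by apply: eq_big_nat => m /andP[m_gt0 _]; apply: summand1E. Qed.

Lemma c1E : c1 n d k T = beta ^+ 2 * diag_coef - d%:R / k%:R.
Proof.
rewrite /c1 -/beta; congr (_ * _ - _).
by apply: eq_big_nat => m /andP[m_gt0 _]; apply: summand1E.
Qed.

Lemma c2E : c2 n d k T = 1 - beta ^+ 2 * offdiag_coef.
Proof.
rewrite /c2 -/beta; congr (_ - _ * _).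
by apply: eq_big_nat => m /andP[m_gt1 _]; apply: summand2E.
Qed.

Hypothesis betabar_sum_neq0 : \sum_(1 <= m < n.+1)
  k%:R / (d%:R * T m) * 'C(n.-1, m.-1)%:R * p ^+ m.-1 * (1 - p) ^+ (n - m) != 0.

Lemma betabar_mean : beta * mean_coef = 1.
Proof. by rewrite /beta /betabar betabar_sumE mulVf // -betabar_sumE. Qed.

Section Coordinate.
Variable j : 'I_d.

Let diag := \sum_i x i j ^+ 2.
Let offdiag := \sum_i \sum_(l | l != i) x i j * x l j.

Let estimate (B : {set 'I_n}) := n%:R^-1 * beta * ((T #|B|)^-1 * \sum_(i in B) x i j).

Lemma xhat_occupancy S : xhat k T x S j = estimate (occupancy S j).
Proof.
rewrite /xhat /Mcount -/(occupancy S j) -/beta /estimate; case: ifPn => [_ | ].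
  rewrite !mulrA; congr (_ * _).
  by rewrite [RHS]big_mkcond; apply: eq_bigr => i _; rewrite /hval inE.
by rewrite -ltnNge ltnS leqn0 cards_eq0 => /eqP ->; rewrite big_set0 !mulr0.
Qed.

Lemma expect_xhat : expect k (fun S => xhat k T x S j) = xbar x j.
Proof.
rewrite (expect_occupancy k_gt0 k_le_d xhat_occupancy).
transitivity (n%:R^-1 * beta *
  \sum_(B : {set 'I_n}) w #|B| / T #|B| * \sum_(i in B) x i j).
  by rewrite mulr_sumr; apply: eq_bigr => B _; rewrite /w /estimate; ring.
rewrite (sum_subsets_linear (fun m => w m / T m)) card_ord -/mean_coef.
by rewrite mulrA -(mulrA _ beta) betabar_mean mulr1.
Qed.

Lemma expect_xhat_sqr : expect k (fun S => xhat k T x S j ^+ 2) =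
  (n%:R^-1 * beta) ^+ 2 * (diag_coef * diag + offdiag_coef * offdiag).
Proof.
have xhat_sqrE S : xhat k T x S j ^+ 2 = estimate (occupancy S j) ^+ 2.
  by rewrite xhat_occupancy.
rewrite (expect_occupancy k_gt0 k_le_d (F := fun B => estimate B ^+ 2) xhat_sqrE).
transitivity ((n%:R^-1 * beta) ^+ 2 *
  \sum_(B : {set 'I_n}) w #|B| / T #|B| ^+ 2 * (\sum_(i in B) x i j) ^+ 2).
  by rewrite mulr_sumr; apply: eq_bigr => B _; rewrite /w /estimate !exprMn !exprVn; ring.
by rewrite (sum_subsets_quadratic (fun m => w m / T m ^+ 2)) card_ord.
Qed.

Lemma expect_sqr_dev : expect k (fun S => (xhat k T x S j - xbar x j) ^+ 2) =
  n%:R ^- 2 *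
  ((beta ^+ 2 * diag_coef - 1) * diag + (beta ^+ 2 * offdiag_coef - 1) * offdiag).
Proof.
rewrite /expect (sum_weighted_sqr_dev (sum_config_prob R n k_le_d) expect_xhat).
have := expect_xhat_sqr; rewrite /expect => ->.
by rewrite /xbar !exprMn sqr_sum_split -/diag -/offdiag exprVn; ring.
Qed.
End Coordinate.

Lemma R1_coordE : R1 x = \sum_j \sum_i x i j ^+ 2.
Proof.
by rewrite /R1 /dotp exchange_big; apply: eq_bigr => j _; apply: eq_bigr => i _; rewrite expr2.
Qed.

Lemma R2_coordE : R2 x = \sum_j \sum_i \sum_(l | l != i) x i j * x l j.
Proof.
rewrite /R2 -sum_ord_neq_sym => [|i l]; last first.
  by rewrite /dotp; apply: eq_bigr => j _; rewrite mulrC.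
by rewrite exchange_big; apply: eq_bigr => i _; rewrite exchange_big.
Qed.

Lemma expect_sqerr : expect k (sqerr k T x) =
  n%:R ^- 2 * (d%:R / k%:R - 1) * R1 x
  + n%:R ^- 2 * (c1 n d k T * R1 x - c2 n d k T * R2 x).
Proof.
have -> : expect k (sqerr k T x) =
    \sum_j expect k (fun S => (xhat k T x S j - xbar x j) ^+ 2).
  rewrite /expect /sqerr (exchange_big_dep xpredT) //=.
  by apply: eq_bigr => S _; rewrite mulr_sumr.
under eq_bigr do rewrite expect_sqr_dev.
rewrite c1E c2E R1_coordE R2_coordE -mulr_sumr big_split /= -!mulr_sumr; ring.
Qed.
End Estimator.

Theorem theorem1 (R : realFieldType) (n d k : nat)
    (x : 'I_n -> 'I_d -> R) (T : nat -> R)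
    (hn : (1 <= n)%N) (hk : (1 <= k)%N) (hkd : (k <= d)%N)
    (hT : forall m : nat, (1 <= m <= n)%N -> T m != 0)
    (hbeta : \sum_(1 <= m < n.+1)
        k%:R / (d%:R * T m) * 'C(n.-1, m.-1)%:R
          * (pk R d k) ^+ m.-1 * (1 - pk R d k) ^+ (n - m) != 0) :
  @expect R n d k (@sqerr R n d k T x)
  = n%:R ^- 2 * (d%:R / k%:R - 1) * @R1 R n d x
    + n%:R ^- 2 * (@c1 R n d k T * @R1 R n d x - @c2 R n d k T * @R2 R n d x).
Proof.
(* [hn] is implied by [hbeta]. *)
exact: expect_sqerr.
Qed.
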